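(* Let $q>1$, $0\le M_0<M$, let $u$ be a sufficiently smooth $L$-periodic solution of $u_t=-\alpha uu_x+\beta u_{xxx}$ on $[0,T]\times\mathbb{R}$, $r>\sup_{t,x}|u(t,x)|$. Assume $u^{(0)}_k=u(0,k\Delta x)$, that $u^{(0)},\dots,u^{(M_0+1)}$ are obtained successively as solutions of the scheme, that $\|u^{(m)}\|_\infty\le r$ for $m\le M_0$, that $\Delta t<\min\{\varepsilon_1(q,r,\Delta x),\varepsilon_2(q,r,\Delta x)\}$, and that $\|u^{(M_0+1)}\|_\infty\le qr$. Let $c_0>0$ be a constant independent of $\Delta t,\Delta x$ with $\|\tau^{(m)}\|,\|\delta^+_x\tau^{(m)}\|\le c_0((\Delta t)^2+(\Delta x)^2)$ for $m=0,\dots,M_0$. Then for $m=0,\dots,M_0$, $$\delta^+_t\|e^{(m)}\|^2\le C_1\,\mu^+_t\|e^{(m)}\|_{H^1}^2 + c_0^2\big((\Delta t)^2+(\Delta x)^2\big)^2,$$ where $C_1=C_1(q,r)=\max\{3|\alpha|(2q^2+1)r^2+1,\ |\alpha|/2\}$.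
   Context: $L>0$, $K\in\mathbb{N}$, $\Delta x=L/K$; $T>0$, $M\in\mathbb{N}$, $\Delta t=T/M$; $\alpha\in\mathbb{R}$, $\beta\ne0$. Grid functions are $K$-periodic real sequences. $\delta^+_x v_k=(v_{k+1}-v_k)/\Delta x$, $\delta^{\langle 1\rangle}_x v_k = (v_{k+1}-v_{k-1})/(2\Delta x)$, $\delta^{\langle 2\rangle}_x v_k = (v_{k+1}-2v_k+v_{k-1})/(\Delta x)^2$, $\|v\|=(\sum_{k=1}^K v_k^2\Delta x)^{1/2}$, $\|v\|_\infty=\max_k|v_k|$, $\|v\|_{H^1}=(\|v\|^2+\|\delta^+_xv\|^2)^{1/2}$; $\delta^+_t v^{(n)}=(v^{(n+1)}-v^{(n)})/\Delta t$, $\mu^+_t v^{(n)}=(v^{(n+1)}+v^{(n)})/2$ (so e.g. $\mu^+_t\|e^{(m)}\|^2=(\|e^{(m+1)}\|^2+\|e^{(m)}\|^2)/2$). The scheme: $u^{(n+1)}$ solves it at step $n$ if $\delta^+_t u^{(n)}_k = -\frac{\alpha}{6}\delta^{\langle 1\rangle}_x\{(u^{(n+1)}_k)^2 + u^{(n+1)}_k u^{(n)}_k + (u^{(n)}_k)^2\} + \beta\delta^{\langle 1\rangle}_x\delta^{\langle 2\rangle}_x \mu^+_t u^{(n)}_k$ for all $k$. $\varepsilon_1(q,r,\Delta x) = (q-1)(\Delta x)^3[\frac{|\alpha|}{6}(\Delta x)^2(q^2+q+1)r + \frac{3}{2}|\beta|(q+1)]^{-1}$, $\varepsilon_2(q,r,\Delta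 x) = (\Delta x)^3[\frac{|\alpha|}{6}(\Delta x)^2(2q+1)r + \frac{3}{2}|\beta|]^{-1}$. $\tilde u^{(m)}_k=u(m\Delta t,k\Delta x)$, $e^{(m)}=u^{(m)}-\tilde u^{(m)}$, and the local truncation error $\tau^{(m)}$ is defined by $\delta^+_t \tilde u^{(m)}_k = -\frac{\alpha}{6}\delta^{\langle 1\rangle}_x\{(\tilde u^{(m+1)}_k)^2 + \tilde u^{(m+1)}_k \tilde u^{(m)}_k + (\tilde u^{(m)}_k)^2\} + \beta\delta^{\langle 1\rangle}_x\delta^{\langle 2\rangle}_x \mu^+_t \tilde u^{(m)}_k+\tau^{(m)}_k$. *)

From Stdlib Require Import Reals Lra ZArith.
Open Scope R_scope.

Definition grid := Z -> R.

Definition periodic (K : nat) (v : grid) : Prop :=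
  forall k : Z, v (k + Z.of_nat K)%Z = v k.

(* gsum f n = f 1 + ... + f n *)
Fixpoint gsum (f : Z -> R) (n : nat) : R :=
  match n with
  | O => 0
  | S n' => gsum f n' + f (Z.of_nat (S n'))
  end.

Fixpoint gmax (f : Z -> R) (n : nat) : R :=
  match n with
  | O => 0
  | S n' => Rmax (gmax f n') (Rabs (f (Z.of_nat (S n'))))
  end.

Definition dxp (dx : R) (v : grid) : grid := fun k => (v (k + 1)%Z - v k) / dx.
Definition d1 (dx : R) (v : grid) : grid := fun k => (v (k + 1)%Z - v (k - 1)%Z) / (2 * dx).
Definition d2 (dx : R) (v : grid) : grid :=
  fun k => (v (k + 1)%Z - 2 * v k + v (k - 1)%Z) / (dx ^ 2).

Definition normsq (K : nat) (dx : R) (v : grid) : R := gsum (fun k => v k ^ 2 * dx) K.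
Definition supnorm (K : nat) (v : grid) : R := gmax v K.
Definition H1sq (K : nat) (dx : R) (v : grid) : R := normsq K dx v + normsq K dx (dxp dx v).

Definition scheme_rhs (alpha beta dx : R) (unew uold : grid) : grid :=
  fun k =>
    - alpha / 6 * d1 dx (fun j => unew j ^ 2 + unew j * uold j + uold j ^ 2) k
    + beta * d1 dx (d2 dx (fun j => (unew j + uold j) / 2)) k.

Definition solves_step (alpha beta dx dt : R) (uold unew : grid) : Prop :=
  forall k : Z, (unew k - uold k) / dt = scheme_rhs alpha beta dx unew uold k.

Definition epsilon1 (alpha beta q r dx : R) : R :=
  (q - 1) * dx ^ 3 /
  (Rabs alpha / 6 * dx ^ 2 * (q ^ 2 + q + 1) * r + 3 / 2 * Rabs beta * (q + 1)).

Definition epsilon2 (alpha beta q r dx : R) : R :=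
  dx ^ 3 / (Rabs alpha / 6 * dx ^ 2 * (2 * q + 1) * r + 3 / 2 * Rabs beta).

Definition usample (u : R -> R -> R) (dt dx : R) (m : nat) : grid :=
  fun k => u (INR m * dt) (IZR k * dx).

Definition tau (alpha beta dx dt : R) (u : R -> R -> R) (m : nat) : grid :=
  fun k =>
    (usample u dt dx (S m) k - usample u dt dx m k) / dt
    - scheme_rhs alpha beta dx (usample u dt dx (S m)) (usample u dt dx m) k.

Definition kdv_solution (alpha beta L T : R) (u : R -> R -> R) : Prop :=
  (forall t x, u t (x + L) = u t x) /\
  exists ut ux uxx uxxx : R -> R -> R,
    (forall t x, 0 <= t <= T ->
       derivable_pt_lim (fun y => u t y) x (ux t x) /\
       derivable_pt_lim (fun y => ux t y) x (uxx t x) /\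
       derivable_pt_lim (fun y => uxx t y) x (uxxx t x)) /\
    (forall t x, 0 < t < T -> derivable_pt_lim (fun s => u s x) t (ut t x)) /\
    (forall t x, 0 <= t <= T -> continuity_pt (fun s => u s x) t) /\
    (forall t x, 0 < t < T ->
       ut t x = - alpha * u t x * ux t x + beta * uxxx t x).

From Stdlib Require Import Reals Lra Lia ZArith.
Open Scope R_scope.

(* Subtracting the consistency relation of the exact solution (residual tau) from the
   scheme, the error e satisfies a linear scheme with nonlinearity
   N = cubic(u^(m+1), u^(m)) - cubic(exact) and forcing -tau.  Testing it against mu_t e
   and summing by parts over a period, the dispersive term vanishes (delta1 delta2 is
   skew-adjoint) and the nonlinear term becomes (alpha/3) <N, delta1 mu_t e>.  The
   sup-norm bounds give |N|^2 <= 9 (2q^2 + 1) r^2 (e^(m+1)^2 + e^(m)^2) pointwise, and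
   Young's inequality together with ||delta1 v|| <= ||delta+ v|| closes the estimate. *)

Lemma gsum_ext (f g : Z -> R) (n : nat) :
  (forall k, f k = g k) -> gsum f n = gsum g n.
Proof. intros Hfg; induction n as [|n IH]; cbn [gsum]; [reflexivity|]. now rewrite IH, Hfg. Qed.

Lemma gsum_add (f g : Z -> R) (n : nat) :
  gsum (fun k => f k + g k) n = gsum f n + gsum g n.
Proof. induction n as [|n IH]; cbn [gsum]; [ring|]. rewrite IH; ring. Qed.

Lemma gsum_scal (c : R) (f : Z -> R) (n : nat) :
  gsum (fun k => c * f k) n = c * gsum f n.
Proof. induction n as [|n IH]; cbn [gsum]; [ring|]. rewrite IH; ring. Qed.

Lemma gsum_le (f g : Z -> R) (n : nat) :
  (forall k, (1 <= k <= Z.of_nat n)%Z -> f k <= g k) -> gsum f n <= gsum g n.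
Proof.
  induction n as [|n IH]; intros Hfg; cbn [gsum]; [lra|].
  apply Rplus_le_compat; [apply IH; intros; apply Hfg | apply Hfg]; lia.
Qed.

Lemma gsum_nonneg (f : Z -> R) (n : nat) : (forall k, 0 <= f k) -> 0 <= gsum f n.
Proof.
  intros Hf; induction n as [|n IH]; cbn [gsum]; [lra|].
  specialize (Hf (Z.of_nat (S n))); lra.
Qed.

Lemma gsum_telescope (F : Z -> R) (n : nat) :
  gsum (fun k => F k - F (k - 1)%Z) n = F (Z.of_nat n) - F 0%Z.
Proof.
  induction n as [|n IH]; cbn [gsum]; [simpl; ring|].
  rewrite IH. replace (Z.of_nat (S n) - 1)%Z with (Z.of_nat n) by lia. ring.
Qed.

Lemma gsum_telescope_periodic (K : nat) (F : Z -> R) :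
  periodic K F -> gsum (fun k => F k - F (k - 1)%Z) K = 0.
Proof. intros HF. rewrite gsum_telescope. specialize (HF 0%Z). simpl in HF. rewrite HF; ring. Qed.

Lemma gsum_shift_pred (K : nat) (F : Z -> R) :
  periodic K F -> gsum (fun k => F (k - 1)%Z) K = gsum F K.
Proof.
  intros HF.
  rewrite (gsum_ext _ (fun k => F k + (-1) * (F k - F (k - 1)%Z))) by (intros; ring).
  rewrite gsum_add, gsum_scal, gsum_telescope_periodic by exact HF. ring.
Qed.

Definition gsub (v w : grid) : grid := fun k => v k - w k.
Definition avg (v w : grid) : grid := fun k => (v k + w k) / 2.
Definition cubic (v w : grid) : grid := fun k => v k ^ 2 + v k * w k + w k ^ 2.
Definition truncation (alpha beta dx dt : R) (V0 V1 : grid) : grid :=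
  fun k => (V1 k - V0 k) / dt - scheme_rhs alpha beta dx V1 V0 k.

Lemma periodic_d2 (K : nat) (dx : R) (v : grid) : periodic K v -> periodic K (d2 dx v).
Proof.
  intros Hv k; unfold d2.
  replace (k + Z.of_nat K + 1)%Z with (k + 1 + Z.of_nat K)%Z by lia.
  replace (k + Z.of_nat K - 1)%Z with (k - 1 + Z.of_nat K)%Z by lia.
  now rewrite !Hv.
Qed.

Lemma periodic_dxp (K : nat) (dx : R) (v : grid) : periodic K v -> periodic K (dxp dx v).
Proof.
  intros Hv k; unfold dxp.
  replace (k + Z.of_nat K + 1)%Z with (k + 1 + Z.of_nat K)%Z by lia.
  now rewrite !Hv.
Qed.

Lemma gsum_d1_antisym (K : nat) (dx : R) (g h : grid) :
  dx <> 0 -> periodic K g -> periodic K h ->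
  gsum (fun k => g k * d1 dx h k + h k * d1 dx g k) K = 0.
Proof.
  intros Hdx Hg Hh.
  set (G := fun k => (g k * h (k + 1)%Z + g (k + 1)%Z * h k) / (2 * dx)).
  rewrite (gsum_ext _ (fun k => G k - G (k - 1)%Z)).
  - apply gsum_telescope_periodic. intros k; unfold G.
    replace (k + Z.of_nat K + 1)%Z with (k + 1 + Z.of_nat K)%Z by lia.
    now rewrite !Hg, !Hh.
  - intros k; unfold G, d1. replace (k - 1 + 1)%Z with k by lia. field; exact Hdx.
Qed.

Lemma gsum_d2_d1 (K : nat) (dx : R) (w : grid) :
  dx <> 0 -> periodic K w -> gsum (fun k => d2 dx w k * d1 dx w k) K = 0.
Proof.
  intros Hdx Hw.
  set (D := fun k => (w (k + 1)%Z - w k) ^ 2 / (2 * dx ^ 3)).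
  rewrite (gsum_ext _ (fun k => D k - D (k - 1)%Z)).
  - apply gsum_telescope_periodic. intros k; unfold D.
    replace (k + Z.of_nat K + 1)%Z with (k + 1 + Z.of_nat K)%Z by lia.
    now rewrite !Hw.
  - intros k; unfold D, d1, d2. replace (k - 1 + 1)%Z with k by lia. field; exact Hdx.
Qed.

Lemma error_equation (alpha beta dx dt : R) (U0 U1 V0 V1 : grid) :
  dt <> 0 -> solves_step alpha beta dx dt U0 U1 ->
  forall k, (gsub U1 V1 k - gsub U0 V0 k) / dt
  = - alpha / 6 * d1 dx (gsub (cubic U1 U0) (cubic V1 V0)) k
    + beta * d1 dx (d2 dx (avg (gsub U1 V1) (gsub U0 V0))) k
    - truncation alpha beta dx dt V0 V1 k.
Proof.
  intros Hdt Hstep k.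
  replace ((gsub U1 V1 k - gsub U0 V0 k) / dt)
    with ((U1 k - U0 k) / dt - (V1 k - V0 k) / dt) by (unfold gsub; field; exact Hdt).
  rewrite Hstep. unfold truncation, scheme_rhs, gsub, cubic, avg, d1, d2, Rdiv. ring.
Qed.

Lemma energy_identity (K : nat) (alpha beta dx dt : R) (E0 E1 N tau : grid) :
  dx <> 0 -> dt <> 0 -> periodic K E0 -> periodic K E1 -> periodic K N ->
  (forall k, (E1 k - E0 k) / dt
     = - alpha / 6 * d1 dx N k + beta * d1 dx (d2 dx (avg E1 E0)) k - tau k) ->
  (normsq K dx E1 - normsq K dx E0) / dt
  = gsum (fun k => (alpha / 3 * N k * d1 dx (avg E1 E0) k - 2 * tau k * avg E1 E0 k) * dx) K.
Proof.
  intros Hdx Hdt HE0 HE1 HN Herr. set (W := avg E1 E0) in *.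
  assert (HW : periodic K W) by (intros k; unfold W, avg; now rewrite HE0, HE1).
  transitivity (gsum (fun k => / dt * (E1 k ^ 2 * dx) + (- / dt) * (E0 k ^ 2 * dx)) K).
  { rewrite gsum_add, !gsum_scal. unfold normsq. field. exact Hdt. }
  transitivity (gsum (fun k => (alpha / 3 * N k * d1 dx W k - 2 * tau k * W k) * dx
      + ((- alpha * dx / 3) * (W k * d1 dx N k + N k * d1 dx W k)
      + ((2 * beta * dx) * (W k * d1 dx (d2 dx W) k + d2 dx W k * d1 dx W k)
      + (- 2 * beta * dx) * (d2 dx W k * d1 dx W k)))) K).
  - apply gsum_ext; intros k.
    replace (/ dt * (E1 k ^ 2 * dx) + - / dt * (E0 k ^ 2 * dx))
      with (2 * W k * dx * ((E1 k - E0 k) / dt)) by (unfold W, avg; field; exact Hdt).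
    rewrite Herr. field.
  - rewrite !gsum_add, !gsum_scal, gsum_d1_antisym, gsum_d1_antisym, gsum_d2_d1;
      auto using periodic_d2. ring.
Qed.

Lemma sq_le_of_abs_le (x y : R) : Rabs x <= y -> x ^ 2 <= y ^ 2.
Proof. intros H. rewrite <- pow2_abs. apply pow_incr. split; [apply Rabs_pos | exact H]. Qed.

Lemma mul_le_abs_half_sq (a x y : R) : a * x * y <= Rabs a * (x ^ 2 + y ^ 2) / 2.
Proof.
  destruct (Rle_dec 0 a) as [Ha | Ha].
  - rewrite Rabs_right by lra.
    assert (0 <= a * (x - y) ^ 2) by (apply Rmult_le_pos; [lra | apply pow2_ge_0]). lra.
  - rewrite Rabs_left by lra.
    assert (0 <= - a * (x + y) ^ 2) by (apply Rmult_le_pos; [lra | apply pow2_ge_0]). lra.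
Qed.

Lemma cubic_diff_sq_le (q r a b c d : R) :
  1 <= q -> Rabs a <= q * r -> Rabs b <= r -> Rabs c <= r -> Rabs d <= r ->
  (a ^ 2 + a * b + b ^ 2 - (c ^ 2 + c * d + d ^ 2)) ^ 2
  <= 9 * (2 * q ^ 2 + 1) * r ^ 2 * ((a - c) ^ 2 + (b - d) ^ 2).
Proof.
  intros Hq Ha Hb Hc Hd.
  assert (HA : (a + b + c) ^ 2 <= ((q + 2) * r) ^ 2).
  { apply sq_le_of_abs_le. pose proof (Rabs_triang (a + b) c). pose proof (Rabs_triang a b). lra. }
  assert (HB : (b + c + d) ^ 2 <= (3 * r) ^ 2).
  { apply sq_le_of_abs_le. pose proof (Rabs_triang (b + c) d). pose proof (Rabs_triang b c). lra. }
  replace (a ^ 2 + a * b + b ^ 2 - (c ^ 2 + c * d + d ^ 2))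
    with ((a - c) * (a + b + c) + (b - d) * (b + c + d)) by ring.
  set (x := a - c); set (y := b - d); set (A := a + b + c); set (B := b + c + d).
  assert (Hx : 0 <= x ^ 2) by apply pow2_ge_0. assert (Hy : 0 <= y ^ 2) by apply pow2_ge_0.
  assert (Hr : 0 <= r ^ 2) by apply pow2_ge_0.
  assert (Hcs : (x * A + y * B) ^ 2 <= 2 * (x ^ 2 * A ^ 2) + 2 * (y ^ 2 * B ^ 2))
    by (pose proof (pow2_ge_0 (x * A - y * B)); nra).
  assert (HxA : x ^ 2 * A ^ 2 <= x ^ 2 * ((q + 2) ^ 2 * r ^ 2))
    by (apply Rmult_le_compat_l; [exact Hx | rewrite <- Rpow_mult_distr; exact HA]).
  assert (HyB : y ^ 2 * B ^ 2 <= y ^ 2 * (9 * r ^ 2))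
    by (apply Rmult_le_compat_l;
        [exact Hy | replace (9 * r ^ 2) with ((3 * r) ^ 2) by ring; exact HB]).
  (* [9 (2q^2 + 1) - 2 (q + 2)^2 = (4q - 1)^2] *)
  assert (Hq2 : 2 * (q + 2) ^ 2 <= 9 * (2 * q ^ 2 + 1)) by nra.
  assert (H9 : 18 <= 9 * (2 * q ^ 2 + 1)) by nra.
  assert (x ^ 2 * r ^ 2 * (2 * (q + 2) ^ 2) <= x ^ 2 * r ^ 2 * (9 * (2 * q ^ 2 + 1)))
    by (apply Rmult_le_compat_l; [apply Rmult_le_pos |]; assumption).
  assert (y ^ 2 * r ^ 2 * 18 <= y ^ 2 * r ^ 2 * (9 * (2 * q ^ 2 + 1)))
    by (apply Rmult_le_compat_l; [apply Rmult_le_pos |]; assumption).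
  lra.
Qed.

Lemma energy_density_le (alpha q r C1 a b c d t X : R) :
  1 <= q -> Rabs a <= q * r -> Rabs b <= r -> Rabs c <= r -> Rabs d <= r ->
  3 * Rabs alpha * (2 * q ^ 2 + 1) * r ^ 2 + 1 <= C1 ->
  alpha / 3 * (a ^ 2 + a * b + b ^ 2 - (c ^ 2 + c * d + d ^ 2)) * X
    - 2 * t * (((a - c) + (b - d)) / 2)
  <= t ^ 2 + C1 / 2 * ((a - c) ^ 2 + (b - d) ^ 2) + Rabs alpha / 6 * X ^ 2.
Proof.
  intros Hq Ha Hb Hc Hd HC1.
  pose proof (cubic_diff_sq_le q r a b c d Hq Ha Hb Hc Hd) as HN.
  set (N := a ^ 2 + a * b + b ^ 2 - (c ^ 2 + c * d + d ^ 2)) in *.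
  set (S := (a - c) ^ 2 + (b - d) ^ 2) in *.
  assert (HS : 0 <= S)
    by (unfold S; pose proof (pow2_ge_0 (a - c)); pose proof (pow2_ge_0 (b - d)); lra).
  assert (Hal : 0 <= Rabs alpha) by apply Rabs_pos.
  assert (Hyoung : alpha * N * X <= Rabs alpha * (N ^ 2 + X ^ 2) / 2) by apply mul_le_abs_half_sq.
  assert (HaN : Rabs alpha * N ^ 2 <= Rabs alpha * (9 * (2 * q ^ 2 + 1) * r ^ 2 * S))
    by (apply Rmult_le_compat_l; assumption).
  assert (HC1S : 3 * Rabs alpha * (2 * q ^ 2 + 1) * r ^ 2 * S <= (C1 - 1) * S)
    by (apply Rmult_le_compat_r; lra).
  assert (Hcross : - 2 * t * (((a - c) + (b - d)) / 2) <= t ^ 2 + S / 2)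
    by (unfold S; pose proof (pow2_ge_0 (t + ((a - c) + (b - d)) / 2));
        pose proof (pow2_ge_0 ((a - c) - (b - d))); nra).
  lra.
Qed.

Lemma normsq_nonneg (K : nat) (dx : R) (v : grid) : 0 <= dx -> 0 <= normsq K dx v.
Proof. intros Hdx. apply gsum_nonneg. intros k. apply Rmult_le_pos; [apply pow2_ge_0 | exact Hdx]. Qed.

Lemma normsq_avg_le (K : nat) (dx : R) (f g : grid) :
  0 <= dx -> normsq K dx (avg f g) <= (normsq K dx f + normsq K dx g) / 2.
Proof.
  intros Hdx. unfold normsq.
  apply Rle_trans with (gsum (fun k => / 2 * (f k ^ 2 * dx) + / 2 * (g k ^ 2 * dx)) K).
  - apply gsum_le; intros k _. unfold avg.
    assert (0 <= (f k - g k) ^ 2 * dx) by (apply Rmult_le_pos; [apply pow2_ge_0 | exact Hdx]).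
    lra.
  - rewrite gsum_add, !gsum_scal. lra.
Qed.

Lemma normsq_d1_le (K : nat) (dx : R) (v : grid) :
  0 < dx -> periodic K v -> normsq K dx (d1 dx v) <= normsq K dx (dxp dx v).
Proof.
  intros Hdx Hv.
  set (P := dxp dx v).
  assert (HP : periodic K (fun k => P k ^ 2 * dx))
    by (intros k; unfold P; now rewrite (periodic_dxp K dx v Hv)).
  replace (normsq K dx (d1 dx v)) with (normsq K dx (avg P (fun k => P (k - 1)%Z))).
  - apply Rle_trans with ((normsq K dx P + normsq K dx (fun k => P (k - 1)%Z)) / 2).
    + apply normsq_avg_le; lra.
    + unfold normsq at 2. rewrite (gsum_shift_pred K (fun k => P k ^ 2 * dx) HP). unfold normsq. lra.
  - unfold normsq. apply gsum_ext; intros k. unfold avg, P, dxp, d1.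
    replace (k - 1 + 1)%Z with k by lia. field. lra.
Qed.

Lemma normsq_dxp_avg_le (K : nat) (dx : R) (f g : grid) :
  0 < dx -> normsq K dx (dxp dx (avg f g)) <= (normsq K dx (dxp dx f) + normsq K dx (dxp dx g)) / 2.
Proof.
  intros Hdx.
  replace (normsq K dx (dxp dx (avg f g))) with (normsq K dx (avg (dxp dx f) (dxp dx g))).
  - apply normsq_avg_le; lra.
  - unfold normsq. apply gsum_ext; intros k. unfold avg, dxp. field. lra.
Qed.

Lemma error_energy_step (K : nat) (alpha beta dx dt q r C1 : R) (U0 U1 V0 V1 : grid) :
  0 < dx -> 0 < dt -> 1 <= q ->
  periodic K U0 -> periodic K U1 -> periodic K V0 -> periodic K V1 ->
  solves_step alpha beta dx dt U0 U1 ->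
  (forall k, (1 <= k <= Z.of_nat K)%Z ->
     Rabs (U1 k) <= q * r /\ Rabs (U0 k) <= r /\ Rabs (V1 k) <= r /\ Rabs (V0 k) <= r) ->
  3 * Rabs alpha * (2 * q ^ 2 + 1) * r ^ 2 + 1 <= C1 -> Rabs alpha / 2 <= C1 ->
  (normsq K dx (gsub U1 V1) - normsq K dx (gsub U0 V0)) / dt
  <= C1 * ((H1sq K dx (gsub U1 V1) + H1sq K dx (gsub U0 V0)) / 2)
     + normsq K dx (truncation alpha beta dx dt V0 V1).
Proof.
  intros Hdx Hdt Hq HU0 HU1 HV0 HV1 Hstep Hbounds HC1 HC1'.
  set (E0 := gsub U0 V0); set (E1 := gsub U1 V1).
  set (tau := truncation alpha beta dx dt V0 V1).
  set (N := gsub (cubic U1 U0) (cubic V1 V0)).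
  assert (HE0 : periodic K E0) by (intros k; unfold E0, gsub; now rewrite HU0, HV0).
  assert (HE1 : periodic K E1) by (intros k; unfold E1, gsub; now rewrite HU1, HV1).
  assert (HN : periodic K N)
    by (intros k; unfold N, gsub, cubic; now rewrite HU0, HU1, HV0, HV1).
  pose proof (error_equation alpha beta dx dt U0 U1 V0 V1 ltac:(lra) Hstep) as Herr.
  rewrite (energy_identity K alpha beta dx dt E0 E1 N tau) by (assumption || lra).
  set (W := avg E1 E0).
  apply Rle_trans with (gsum (fun k => tau k ^ 2 * dx
    + (C1 / 2 * (E1 k ^ 2 * dx + E0 k ^ 2 * dx) + Rabs alpha / 6 * (d1 dx W k ^ 2 * dx))) K).
  { apply gsum_le; intros k Hk.
    apply Rle_trans
      with ((tau k ^ 2 + C1 / 2 * (E1 k ^ 2 + E0 k ^ 2) + Rabs alpha / 6 * d1 dx W k ^ 2) * dx);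
      [apply Rmult_le_compat_r; [lra |] | right; ring].
    destruct (Hbounds k Hk) as (H1 & H0 & H1' & H0').
    unfold N, W, avg, E0, E1, gsub, cubic. apply energy_density_le with q r; assumption. }
  rewrite !gsum_add, !gsum_scal, gsum_add.
  fold (normsq K dx tau) (normsq K dx E1) (normsq K dx E0) (normsq K dx (d1 dx W)).
  assert (HW : periodic K W) by (intros k; unfold W, avg; now rewrite HE0, HE1).
  pose proof (normsq_d1_le K dx W Hdx HW) as HD.
  pose proof (normsq_dxp_avg_le K dx E1 E0 Hdx) as HP; fold W in HP.
  pose proof (normsq_nonneg K dx (dxp dx E1) ltac:(lra)).
  pose proof (normsq_nonneg K dx (dxp dx E0) ltac:(lra)).
  assert (Rabs alpha / 6 * normsq K dx (d1 dx W)
          <= C1 / 2 * (normsq K dx (dxp dx E1) + normsq K dx (dxp dx E0))).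
  { pose proof (Rabs_pos alpha).
    apply Rmult_le_compat; [lra | apply normsq_nonneg; lra | lra | lra]. }
  unfold H1sq. lra.
Qed.

Lemma Rabs_le_supnorm (K : nat) (v : grid) (k : Z) :
  (1 <= k <= Z.of_nat K)%Z -> Rabs (v k) <= supnorm K v.
Proof.
  unfold supnorm. induction K as [|K IH]; intros Hk; cbn [gmax]; [lia |].
  destruct (Z.eq_dec k (Z.of_nat (S K))) as [-> | Hne].
  - apply Rmax_r.
  - eapply Rle_trans; [apply IH; lia | apply Rmax_l].
Qed.

Lemma usample_periodic (L : R) (K : nat) (u : R -> R -> R) (dt dx : R) (n : nat) :
  (1 <= K)%nat -> dx = L / INR K -> (forall t x, u t (x + L) = u t x) ->
  periodic K (usample u dt dx n).
Proof.
  intros HK Hdx Hu k. unfold usample.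
  rewrite plus_IZR, <- INR_IZR_INZ.
  replace ((IZR k + INR K) * dx) with (IZR k * dx + L)
    by (assert (0 < INR K) by (apply lt_0_INR; lia); subst dx; field; lra).
  apply Hu.
Qed.

Lemma usample_bounded (T : R) (M : nat) (u : R -> R -> R) (s dt dx : R) (n : nat) (k : Z) :
  0 <= T -> (1 <= M)%nat -> dt = T / INR M -> (n <= M)%nat ->
  (forall t x, 0 <= t <= T -> Rabs (u t x) <= s) ->
  Rabs (usample u dt dx n k) <= s.
Proof.
  intros HT HM Hdt Hn Hs. apply Hs.
  assert (0 < INR M) by (apply lt_0_INR; lia).
  assert (INR n <= INR M) by (apply le_INR; exact Hn).
  assert (Hdt0 : 0 <= dt)
    by (subst dt; apply Rmult_le_pos; [lra | apply Rlt_le, Rinv_0_lt_compat; lra]).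
  split; [apply Rmult_le_pos; [apply pos_INR | exact Hdt0] |].
  replace T with (INR M * dt) by (subst dt; field; lra).
  apply Rmult_le_compat_r; assumption.
Qed.

Theorem lemma3p4
  (L T alpha beta : R) (K M : nat) (dx dt : R)
  (HL : 0 < L) (HT : 0 < T) (HK : (1 <= K)%nat) (HM : (1 <= M)%nat)
  (Hdx : dx = L / INR K) (Hdt : dt = T / INR M) (Hbeta : beta <> 0)
  (q r c0 : R) (M0 : nat) (u : R -> R -> R) (U : nat -> grid)
  (Hq : 1 < q) (HM0 : (M0 < M)%nat)
  (Hsol : kdv_solution alpha beta L T u)
  (Hr : exists s, (forall t x, 0 <= t <= T -> Rabs (u t x) <= s) /\ s < r)
  (Hper : forall m, (m <= S M0)%nat -> periodic K (U m))
  (Hinit : forall k, U O k = u 0 (IZR k * dx))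
  (Hscheme : forall n, (n <= M0)%nat -> solves_step alpha beta dx dt (U n) (U (S n)))
  (Hbound : forall m, (m <= M0)%nat -> supnorm K (U m) <= r)
  (Hdtsmall : dt < Rmin (epsilon1 alpha beta q r dx) (epsilon2 alpha beta q r dx))
  (Hlast : supnorm K (U (S M0)) <= q * r)
  (Hc0 : 0 < c0)
  (Htau : forall m, (m <= M0)%nat ->
     sqrt (normsq K dx (tau alpha beta dx dt u m)) <= c0 * (dt ^ 2 + dx ^ 2) /\
     sqrt (normsq K dx (dxp dx (tau alpha beta dx dt u m))) <= c0 * (dt ^ 2 + dx ^ 2)) :
  let e := fun m : nat => fun k : Z => U m k - usample u dt dx m k in
  let C1 := Rmax (3 * Rabs alpha * (2 * q ^ 2 + 1) * r ^ 2 + 1) (Rabs alpha / 2) in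
  forall m, (m <= M0)%nat ->
    (normsq K dx (e (S m)) - normsq K dx (e m)) / dt
    <= C1 * ((H1sq K dx (e (S m)) + H1sq K dx (e m)) / 2)
       + c0 ^ 2 * (dt ^ 2 + dx ^ 2) ^ 2.
Proof.
  intros e C1 m Hm.
  assert (Hdx_pos : 0 < dx) by (subst dx; apply Rdiv_lt_0_compat; [lra | apply lt_0_INR; lia]).
  assert (Hdt_pos : 0 < dt) by (subst dt; apply Rdiv_lt_0_compat; [lra | apply lt_0_INR; lia]).
  destruct Hsol as [Hu_per _]. destruct Hr as [s [Hs Hsr]].
  assert (Hr0 : 0 <= r) by (pose proof (Hs 0 0 ltac:(lra)); pose proof (Rabs_pos (u 0 0)); lra).
  assert (Hsample : forall n k, (n <= S M0)%nat -> Rabs (usample u dt dx n k) <= r).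
  { intros n k Hn. apply Rle_trans with s; [| lra].
    apply usample_bounded with T M; [lra | exact HM | exact Hdt | lia | exact Hs]. }
  assert (Hnext : forall k, (1 <= k <= Z.of_nat K)%Z -> Rabs (U (S m) k) <= q * r).
  { intros k Hk. eapply Rle_trans; [apply Rabs_le_supnorm, Hk |].
    destruct (Nat.eq_dec m M0) as [-> | Hne]; [exact Hlast |].
    eapply Rle_trans; [apply Hbound; lia | nra]. }
  eapply Rle_trans.
  - apply (error_energy_step K alpha beta dx dt q r C1 (U m) (U (S m))); try lra.
    + apply Hper; lia.
    + apply Hper; lia.
    + apply usample_periodic with L; assumption.
    + apply usample_periodic with L; assumption.
    + apply Hscheme, Hm.
    + intros k Hk. repeat split; [apply Hnext, Hk | | apply Hsample; lia | apply Hsample; lia].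
      eapply Rle_trans; [apply Rabs_le_supnorm, Hk | apply Hbound, Hm].
    + apply Rmax_l.
    + apply Rmax_r.
  - apply Rplus_le_compat_l.
    destruct (Htau m Hm) as [Htau_m _].
    change (truncation alpha beta dx dt (usample u dt dx m) (usample u dt dx (S m)))
      with (tau alpha beta dx dt u m).
    rewrite <- (pow2_sqrt (normsq K dx (tau alpha beta dx dt u m))) by (apply normsq_nonneg; lra).
    rewrite <- Rpow_mult_distr. apply pow_incr. split; [apply sqrt_pos | exact Htau_m].
Qed.
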